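(* Let $G$ be a loop-tangle graph and let $R$ be the disc bounded by the loop, containing the tangle graph. For each positive integer $N$ let $f_N$ be the number of $N$-sided faces of $G$ in $R$. Then \[3f_1 + 2f_2 + f_3 = 3 + \sum_{n=1}^{\infty} n f_{n+4}.\]
   Context: In an oriented knot diagram, a loop is a subarc $\gamma^\dagger$ of the knot such that (1) $\gamma^\dagger$ has exactly one self-crossing $u$, forming a loop bounding a disc $R$; (2) apart from $u$, at every crossing $\gamma^\dagger$ meets, $\gamma^\dagger$ is the under-strand (or at every such crossing it is the over-strand); (3) the two edges incident to $u$ not on the loop lie outside $R$. The tangle consists of the arcs of the knot inside $R$, each crossing the loop transversally at its two endpoints. The loop-tangle graph is obtained from the loop together with the tangle by forgetting over/under information: its vertices are the self-crossing $u$, the crossings of tangle arcs with the loop, and the crossings of the tangle inside $R$, each of degree $4$; it also contains the outward edges (sprouts) leaving the loop, each attached to a single vertex on the loop. An $N$-sided face is a face of this graph inside $R$ whose boundary consists of $N$ edges. *)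

(* Loop-tangle graphs encoded as combinatorial planar maps
   (rotation systems) of the part of the graph lying in the closed disc R. *)
From mathcomp Require Import all_boot.
Set Implicit Arguments. Unset Strict Implicit. Unset Printing Implicit Defensive.

Section LoopTangle.
Variable D : finType.            (* darts (half-edges) *)
Variables (edge node : D -> D).  (* edge involution, rotation around a vertex *)
Variable o : D.                  (* a dart of the outer face (outside of the loop) *)

Definition face (x : D) : D := node (edge x).

Definition planar_map : Prop :=
  [/\ injective node, involutive edge, (forall x, edge x != x),
      (forall x y, connect [rel a b | (b == node a) || (b == edge a)] x y)
    & 2 * (fcard node D + fcard face D) = #|D| + 4].

(* x is a dart of the outer face (the complement of the disc R) *)
Definition outer (x : D) : bool := fconnect face o x.

Definition on_loop (x : D) : bool := [exists y, outer y && fconnect node x y].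

Definition deg (x : D) : nat := order node x.

(* going straight through the far endpoint of the edge of x (degree 4 there) *)
Definition straight (x : D) : D := node (node (edge x)).

(* The restriction of a loop-tangle graph to the closed disc R:
   - the loop bounds the outer face, and is a simple closed curve (every
     vertex appears once along it);
   - the self-crossing u is the unique loop vertex of degree 2 in R (its two
     other edges are outside R); every other loop vertex has degree 3 in R
     (one tangle arc crossing the loop, its sprout being outside R);
   - tangle crossings inside R have degree 4;
   - the tangle consists of arcs: following a strand straight through interior
     crossings always reaches the loop (no closed strands inside R). *)
Definition loop_tangle_map : Prop :=
  planar_map /\
  (forall x y, outer x -> outer y -> fconnect node x y -> x = y) /\
  [/\
      (forall x, outer x -> (deg x == 2) || (deg x == 3)),
      #|[pred x | outer x & deg x == 2]| = 1,
      (forall x, ~~ on_loop x -> deg x = 4)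
    & (forall x, ~~ on_loop x -> exists n, on_loop (edge (iter n straight x)))].

(* f_N : number of N-sided faces inside R (faces other than the outer one,
   the number of sides being the length of the boundary walk) *)
Definition nfaces (N : nat) : nat :=
  fcard face [pred x | ~~ outer x & order face x == N].

End LoopTangle.

From mathcomp Require Import all_boot zify.
Set Implicit Arguments. Unset Strict Implicit.

(* If the loop has L vertices, the outer face has L darts and the inner faces
   have sum_N N f_N darts; the loop vertices carry 3L - 1 darts (only the
   self-crossing has degree 2) and every interior crossing carries 4.  Euler's
   formula 2 (V + F) = #darts + 4 then reduces to sum_N (4 - N) f_N = 3, which
   is the identity once the terms with N >= 5 are moved to the right. *)

Lemma sum_nat_vanishing_tail (F : nat -> nat) m n1 n2 :
  n1 <= n2 -> (forall i, n1 <= i -> F i = 0) ->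
  \sum_(m <= i < n2) F i = \sum_(m <= i < n1) F i.
Proof.
move=> le_n12 F0; rewrite (big_nat_widen _ _ _ _ _ le_n12) [RHS]big_mkcond /=.
by apply: eq_bigr => i _; case: ltnP => // /F0.
Qed.

Lemma face_balance_rearrange (f : nat -> nat) K M :
  f 0 = 0 -> M + 5 <= K -> (forall n, M < n -> f (n + 4) = 0) ->
  4 * \sum_(n < K) f n = \sum_(n < K) n * f n + 3 ->
  3 * f 1 + 2 * f 2 + f 3 = 3 + \sum_(1 <= n < M.+1) n * f (n + 4).
Proof.
move=> f0 le_MK fM.
rewrite -(big_mkord xpredT f) -(big_mkord xpredT (fun n => n * f n)) big_distrr /=.
have K5 : 5 <= K := leq_trans (leq_addl M 5) le_MK.
have split5 g : \sum_(0 <= n < K) g n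
    = g 0 + g 1 + g 2 + g 3 + g 4 + \sum_(1 <= n < K - 4) g (n + 4).
  rewrite (@big_cat_nat _ _ _ 5 0 K _ _ isT K5) /= -[5]/(1 + 4) big_addn.
  by rewrite 5?big_nat_recl // big_geq // addn0 !addnA.
rewrite !split5 f0 /=.
have tailM : \sum_(1 <= n < K - 4) n * f (n + 4) = \sum_(1 <= n < M.+1) n * f (n + 4).
  by apply: sum_nat_vanishing_tail => [|i /fM ->]; [lia | rewrite muln0].
have tail4 : \sum_(1 <= n < K - 4) (n + 4) * f (n + 4)
    = \sum_(1 <= n < K - 4) 4 * f (n + 4) + \sum_(1 <= n < K - 4) n * f (n + 4).
  by rewrite -big_split; apply: eq_bigr => n _; rewrite mulnDl addnC.
by rewrite tail4 tailM; lia.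
Qed.

Lemma card_partition_nat (T : finType) (a : {pred T}) (h : T -> nat) K :
  (forall x, h x < K) -> #|a| = \sum_(n < K) #|[pred x in a | h x == n]|.
Proof.
move=> ltK; rewrite -sum1_card (partition_big (fun x => Ordinal (ltK x)) xpredT) //=.
by apply: eq_bigr => n _; rewrite -sum1_card; apply: eq_bigl => x; rewrite inE.
Qed.

Section OrbitCounting.
Variables (T : finType) (f : T -> T).
Hypothesis f_inj : injective f.

Lemma order_fconnect x y : fconnect f x y -> order f x = order f y.
Proof.
by move=> xy; apply: eq_card => z; rewrite !inE (same_connect (fconnect_sym f_inj) xy).
Qed.

Section OrderBound.
Variable K : nat.
Hypothesis card_lt_K : #|T| < K.

Lemma order_lt_K x : order f x < K.
Proof. exact: leq_ltn_trans (max_card _) card_lt_K. Qed.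

Lemma fcard_by_order (a : {pred T}) :
  fcard f a = \sum_(n < K) fcard f [pred x in a | order f x == n].
Proof.
rewrite /n_comp_mem (card_partition_nat _ order_lt_K).
by apply: eq_bigr => n _; apply: eq_card => x; rewrite !inE andbA.
Qed.

Lemma card_by_order (a : {pred T}) : fclosed f a ->
  #|a| = \sum_(n < K) n * fcard f [pred x in a | order f x == n].
Proof.
move=> a_cl; rewrite (card_partition_nat _ order_lt_K).
apply: eq_bigr => n _; rewrite mulnC fcard_order_set //.
  by apply/subsetP => x; rewrite !inE => /andP[].
apply: (intro_closed (fconnect_sym f_inj)) => x y /eqP <-; rewrite !inE.
by rewrite -(fclosed1 a_cl) (order_fconnect (fconnect1 f x)).
Qed.

End OrderBound.

Section Transversal.
Variable b : {pred T}.
Hypothesis b_transversal : {in b &, forall x y, fconnect f x y -> x = y}.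

Lemma mem_fclosure_sum x :
  (x \in fclosure f b : nat) = \sum_(y in b) fconnect f y x.
Proof.
have sym_f := fconnect_sym f_inj.
case: (boolP (x \in fclosure f b)) => [/existsP[y /andP[/[!inE] xy b_y]] | x_out].
  rewrite (bigD1 y) //= sym_f xy big1 // => z /andP[b_z /negPf z_y].
  apply/eqP; rewrite eqb0; apply: contraFN z_y => zx.
  by apply/eqP/b_transversal/(connect_trans zx); rewrite // sym_f.
rewrite big1 // => y b_y; apply/eqP; rewrite eqb0.
by apply: contraNN x_out => yx; apply/existsP; exists y; rewrite !inE sym_f yx.
Qed.

Lemma card_fclosure_transversal : #|fclosure f b| = \sum_(y in b) order f y.
Proof.
rewrite -sum1_card big_mkcond /= (eq_bigr _ (fun x _ => mem_fclosure_sum x)).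
rewrite exchange_big; apply: eq_bigr => y _.
by rewrite /order -sum1_card [RHS]big_mkcond.
Qed.

Lemma fcard_fclosure_transversal : fcard f (fclosure f b) = #|b|.
Proof.
have sym_f := fconnect_sym f_inj.
have root_inj : {in b &, injective (froot f)}.
  by move=> x y b_x b_y /(rootP sym_f); apply: b_transversal.
rewrite /n_comp_mem -(card_in_imset root_inj); apply: eq_card => r; rewrite !inE.
apply/andP/imsetP => [[/eqP r_root /existsP[y /andP[/= ry b_y]]] | [y b_y ->]].
  by exists y => //; rewrite -r_root; apply/(rootP sym_f).
split; first exact: roots_root.
apply/existsP; exists y; rewrite !inE b_y andbT /=.
by rewrite sym_f connect_root.
Qed.

End Transversal.

End OrbitCounting.

Section LoopTangleCounts.
Variables (D : finType) (edge node : D -> D) (o : D).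
Hypothesis loop_tangle : loop_tangle_map edge node o.

Local Notation fc := (face edge node).
Local Notation out := (outer edge node o).
Local Notation onl := (on_loop edge node o).
Local Notation nf := (nfaces edge node o).

Lemma node_inj : injective node. Proof. by case: loop_tangle => [[]]. Qed.

Lemma face_inj : injective fc.
Proof. by apply: inj_comp node_inj (inv_inj _); case: loop_tangle => [[]]. Qed.

Lemma outer_transversal : {in out &, forall x y, fconnect node x y -> x = y}.
Proof. by case: loop_tangle => _ [out_uniq _] x y; apply: out_uniq. Qed.

Lemma on_loop_fclosure : onl =i fclosure node out.
Proof.
move=> x; rewrite unfold_in; apply/existsP/pred0Pn => -[y /andP[]] => [oy xy | xy oy].
  by exists y; rewrite /= !inE xy.
by exists y; apply/andP.
Qed.

Lemma nfaces0 : nf 0 = 0.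
Proof. by apply: eq_card0 => x; rewrite !inE eqn0Ngt order_gt0 !andbF. Qed.

Lemma loop_vertex_count : fcard node onl = #|out|.
Proof.
rewrite (eq_n_comp_r on_loop_fclosure).
exact (fcard_fclosure_transversal node_inj outer_transversal).
Qed.

Lemma loop_dart_count : #|onl| + 1 = 3 * #|out|.
Proof.
case: loop_tangle => _ [_ [deg23 one_deg2 _ _]].
have deg2_sum : \sum_(x in out) (deg node x == 2 : nat) = 1.
  rewrite -[RHS]one_deg2 -sum1_card [RHS]big_mkcondr.
  by apply: eq_big => // x; case: eqP.
rewrite (eq_card on_loop_fclosure) (card_fclosure_transversal node_inj outer_transversal).
rewrite -[X in _ + X = _]deg2_sum -big_split mulnC -sum_nat_const.
by apply: eq_bigr => x /deg23; rewrite /deg; case/orP => /eqP ->.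
Qed.

Lemma interior_dart_count : #|[predC onl]| = fcard node [predC onl] * 4.
Proof.
case: loop_tangle => _ [_ [_ _ deg4 _]].
rewrite fcard_order_set //; first exact: node_inj.
  by apply/subsetP => x /deg4 /eqP.
apply: predC_closed => x y xy; rewrite !on_loop_fclosure.
exact: (closure_closed (fconnect_sym node_inj) out xy).
Qed.

Variable K : nat.
Hypothesis card_lt_K : #|D| < K.

Lemma dart_count : #|D| = #|out| + \sum_(n < K) n * nf n.
Proof.
have inner_closed := predC_closed (connect_closed (fconnect_sym face_inj) o).
by rewrite -(cardC out) (card_by_order face_inj card_lt_K inner_closed).
Qed.

Lemma face_count : fcard fc D = 1 + \sum_(n < K) nf n.
Proof.
rewrite (n_compC out) (n_comp_connect (fconnect_sym face_inj)).
by rewrite (fcard_by_order _ card_lt_K).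
Qed.

Lemma face_balance : 4 * \sum_(n < K) nf n = \sum_(n < K) n * nf n + 3.
Proof.
have euler : 2 * (fcard node D + fcard fc D) = #|D| + 4 by case: loop_tangle => [[]].
have vertex_split : fcard node D = fcard node onl + fcard node [predC onl].
  exact: n_compC.
have dart_split : #|onl| + #|[predC onl]| = #|D| by exact: cardC.
have darts := dart_count; have faces := face_count.
have loop_vertices := loop_vertex_count; have loop_darts := loop_dart_count.
have interior_darts := interior_dart_count.
lia.
Qed.

End LoopTangleCounts.

Theorem theorem5p11 (D : finType) (edge node : D -> D) (o : D) :
  loop_tangle_map edge node o ->
  forall M : nat, (forall n, M < n -> nfaces edge node o (n + 4) = 0) ->
  3 * nfaces edge node o 1 + 2 * nfaces edge node o 2 + nfaces edge node o 3
  = 3 + \sum_(1 <= n < M.+1) n * nfaces edge node o (n + 4).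
Proof.
move=> loop_tangle M large_faces0.
apply: (face_balance_rearrange (nfaces0 _ _ _) (leq_addl #|D| (M + 5)) large_faces0).
by apply: face_balance => //; lia.
Qed.
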